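(* Let $(X,f)$ be a dynamical system. Suppose there are $\varepsilon>0$ and a dense Mycielski set $S\subset X$ such that (i) $S\times S\subset\mathrm{SProx}(f)$, and (ii) for every nonempty open $W\subset X$ there is a Cantor set $C\subset S\cap W$ which is syndetically $3\varepsilon$-scrambled for $f$. Then $f$ has a dense Mycielski syndetically $\varepsilon$-scrambled set $T$ with $T\subset S$.
   Context: Dynamical system: compact metric space $X$ with metric $d$ and continuous $f$. Syndetic: subset of $\mathbb N$ meeting every set with arbitrarily long runs of consecutive integers. $\mathrm{Asy}(f)=\{(x,y):d(f^nx,f^ny)\to0\}$, $\mathrm{SProx}(f)=\{(x,y):\{n:d(f^nx,f^ny)<\eta\}$ syndetic for all $\eta>0\}$. A set with at least two points is syndetically $\delta$-scrambled if every pair of distinct points $x,y$ in it lies in $\mathrm{SProx}(f)\setminus\mathrm{Asy}(f)$ and satisfies $\limsup_n d(f^nx,f^ny)\ge\delta$. Cantor set: nonempty compact perfect totally disconnected; Mycielski set: countable union of Cantor sets. *)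

From Stdlib Require Import Reals List.
Open Scope R_scope.

Section Defs.
Variable X : Type.
Variable d : X -> X -> R.

Definition is_metric : Prop :=
  (forall x y, 0 <= d x y) /\
  (forall x y, d x y = 0 <-> x = y) /\
  (forall x y, d x y = d y x) /\
  (forall x y z, d x z <= d x y + d y z).

Definition is_open (U : X -> Prop) : Prop :=
  forall x, U x -> exists r, r > 0 /\ forall y, d x y < r -> U y.

Definition compact_set (K : X -> Prop) : Prop :=
  forall (I : Type) (U : I -> X -> Prop),
    (forall i, is_open (U i)) ->
    (forall x, K x -> exists i, U i x) ->
    exists l : list I, forall x, K x -> exists i, In i l /\ U i x.

Definition compact_space : Prop := compact_set (fun _ => True).

Definition dense (S : X -> Prop) : Prop :=
  forall W, is_open W -> (exists x, W x) -> exists x, W x /\ S x.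

Definition connected_set (A : X -> Prop) : Prop :=
  ~ exists U V, is_open U /\ is_open V /\
      (forall x, A x -> U x \/ V x) /\
      (exists x, A x /\ U x) /\ (exists x, A x /\ V x) /\
      (forall x, A x -> U x -> V x -> False).

Definition totally_disconnected (K : X -> Prop) : Prop :=
  forall A, (forall x, A x -> K x) -> connected_set A ->
    forall x y, A x -> A y -> x = y.

(* no isolated points (closedness follows from compactness) *)
Definition perfect_set (K : X -> Prop) : Prop :=
  forall x, K x -> forall r, r > 0 -> exists y, K y /\ y <> x /\ d x y < r.

Definition cantor_set (K : X -> Prop) : Prop :=
  (exists x, K x) /\ compact_set K /\ perfect_set K /\ totally_disconnected K.

Definition mycielski_set (S : X -> Prop) : Prop :=
  exists C : nat -> X -> Prop,
    (forall n, cantor_set (C n)) /\ (forall x, S x <-> exists n, C n x).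

Variable f : X -> X.

Definition continuous_map : Prop :=
  forall x eps, eps > 0 -> exists delta, delta > 0 /\
    forall y, d x y < delta -> d (f x) (f y) < eps.

Definition orbit_dist (x y : X) (n : nat) : R := d (Nat.iter n f x) (Nat.iter n f y).

Definition syndetic (A : nat -> Prop) : Prop :=
  forall B : nat -> Prop,
    (forall L : nat, exists m, forall k, (k < L)%nat -> B (m + k)%nat) ->
    exists n, A n /\ B n.

Definition Asy (x y : X) : Prop :=
  forall eps, eps > 0 -> exists N, forall n, (n >= N)%nat -> orbit_dist x y n < eps.

Definition SProx (x y : X) : Prop :=
  forall eta, eta > 0 -> syndetic (fun n => orbit_dist x y n < eta).

Definition limsup_ge (x y : X) (delta : R) : Prop :=
  forall eps, eps > 0 -> forall N, exists n, (n >= N)%nat /\ orbit_dist x y n > delta - eps.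

Definition synd_scrambled (delta : R) (T : X -> Prop) : Prop :=
  (exists x y, T x /\ T y /\ x <> y) /\
  forall x y, T x -> T y -> x <> y ->
    SProx x y /\ ~ Asy x y /\ limsup_ge x y delta.

End Defs.
Arguments is_metric {X}. Arguments is_open {X}. Arguments compact_set {X}. Arguments compact_space {X}. Arguments dense {X}. Arguments connected_set {X}. Arguments totally_disconnected {X}. Arguments perfect_set {X}. Arguments cantor_set {X}. Arguments mycielski_set {X}. Arguments continuous_map {X}. Arguments orbit_dist {X}. Arguments Asy {X}. Arguments SProx {X}. Arguments limsup_ge {X}. Arguments synd_scrambled {X}.

From Stdlib Require Import Reals List.
From Stdlib Require Import Lia Lra Classical ClassicalEpsilon Cantor.
Import ListNotations.
Open Scope R_scope.

(* Since S × S ⊂ SProx(f), it suffices to build T with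
   limsup_n d(fⁿx, fⁿy) ≥ ε for all distinct x, y ∈ T (this also rules out
   asymptoticity).  Write [far_after s x y] when d(fⁿx, fⁿy) > ε - 1/(s+1)
   for some n ≥ s; we need [far_after s x y] for every s.  Two facts drive
   the construction:
   - (3ε-trick) for any x and distinct y₁, y₂ in a 3ε-scrambled set, x is
     far_after s from y₁ or from y₂, by the triangle inequality;
   - [far_after s] is an open relation, by continuity of fⁿ.
   Fix a countable base of balls W_m (compactness gives finite 1/(k+1)-nets)
   and a 3ε-scrambled Cantor set C_m ⊂ S ∩ W_m.  A Cantor scheme assigns at
   stage s to every index (m, w), m ≤ s, w a binary word of length s - m, a
   closed ball of radius ≤ 1/(s+1) centred in C_m, children inside parents,
   distinct stage-s balls pairwise far_after s.  The points of C_m lying on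
   a branch of the scheme form a Cantor set K_m, and T = ⋃ K_m. *)

Lemma INR_succ_pos (n : nat) : 0 < INR (S n).
Proof. apply lt_0_INR; lia. Qed.

Lemma inv_succ_pos (n : nat) : 0 < / INR (S n).
Proof. apply Rinv_0_lt_compat, INR_succ_pos. Qed.

Lemma inv_succ_small (e : R) :
  e > 0 -> exists N, forall n, (N <= n)%nat -> / INR (S n) < e.
Proof.
  intros He. destruct (INR_unbounded (/ e)) as [N HN]. exists N. intros n Hn.
  assert (HNn : INR N <= INR (S n)) by (apply le_INR; lia).
  assert (Hinv : 0 < / e) by (apply Rinv_0_lt_compat; lra).
  rewrite <- (Rinv_inv e).
  apply Rinv_lt_contravar; [apply Rmult_lt_0_compat|]; pose proof (INR_succ_pos n); lra.
Qed.

Lemma inv_succ_anti (m n : nat) : (m <= n)%nat -> / INR (S n) <= / INR (S m).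
Proof. intros H. apply Rinv_le_contravar; [apply INR_succ_pos | apply le_INR; lia]. Qed.

Section MetricSpace.
Variable X : Type.
Variable d : X -> X -> R.
Hypothesis Hd : is_metric d.

Lemma d_nonneg x y : 0 <= d x y. Proof. apply Hd. Qed.
Lemma d_refl x : d x x = 0. Proof. apply Hd; reflexivity. Qed.
Lemma d_sym x y : d x y = d y x. Proof. apply Hd. Qed.
Lemma d_tri x y z : d x z <= d x y + d y z. Proof. apply Hd. Qed.
Lemma d_zero_eq x y : d x y = 0 -> x = y. Proof. apply Hd. Qed.

Lemma open_ball_open (c : X) (r : R) : is_open d (fun y => d c y < r).
Proof.
  intros y Hy. exists (r - d c y). split; [lra|]. intros z Hz.
  pose proof (d_tri c y z). lra.
Qed.

Definition cball : Type := (X * R)%type.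

Definition in_cball (b : cball) (x : X) : Prop := d (fst b) x <= snd b.

(* [b'] has positive radius and lies inside [b], as witnessed by the
   triangle inequality on centres and radii. *)
Definition cball_sub (b' b : cball) : Prop :=
  0 < snd b' /\ d (fst b) (fst b') + snd b' <= snd b.

Lemma cball_sub_incl b' b x : cball_sub b' b -> in_cball b' x -> in_cball b x.
Proof.
  unfold cball_sub, in_cball. intros [_ Hle] Hx.
  pose proof (d_tri (fst b) (fst b') x). lra.
Qed.

Lemma cball_sub_refl b : 0 < snd b -> cball_sub b b.
Proof. unfold cball_sub. rewrite d_refl. lra. Qed.

Lemma cball_sub_trans b'' b' b : cball_sub b'' b' -> cball_sub b' b -> cball_sub b'' b.
Proof.
  unfold cball_sub. intros [H1 H2] [_ H4]. split; [exact H1|].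
  pose proof (d_tri (fst b) (fst b') (fst b'')). lra.
Qed.

Lemma cball_sub_rad b' b : cball_sub b' b -> 0 < snd b' <= snd b.
Proof. unfold cball_sub. pose proof (d_nonneg (fst b) (fst b')). lra. Qed.

Lemma in_cball_center b : 0 <= snd b -> in_cball b (fst b).
Proof. unfold in_cball. rewrite d_refl. auto. Qed.

Lemma cball_diam b x y : in_cball b x -> in_cball b y -> d x y <= 2 * snd b.
Proof.
  unfold in_cball. intros Hx Hy. pose proof (d_tri x (fst b) y).
  rewrite (d_sym x (fst b)) in *. lra.
Qed.

Lemma cball_compl_open b : is_open d (fun x => ~ in_cball b x).
Proof.
  intros x Hx. unfold in_cball in *. exists (d (fst b) x - snd b). split; [lra|].
  intros y Hy. pose proof (d_tri (fst b) y x). rewrite (d_sym y x) in *. lra.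
Qed.

Lemma cballs_compl_open (bs : list cball) x :
  (forall b, In b bs -> ~ in_cball b x) ->
  exists rho, rho > 0 /\ forall y, d x y < rho -> forall b, In b bs -> ~ in_cball b y.
Proof.
  induction bs as [|b bs IH]; intros Hout.
  - exists 1. split; [lra|]. intros y _ b [].
  - destruct IH as [r1 [Hr1 H1]]; [intros b' Hb'; apply Hout; right; exact Hb'|].
    destruct (cball_compl_open b x (Hout b (or_introl eq_refl))) as [r2 [Hr2 H2]].
    exists (Rmin r1 r2). split; [apply Rmin_Rgt_r; lra|].
    pose proof (Rmin_l r1 r2). pose proof (Rmin_r r1 r2).
    intros y Hy b' [<-|Hb']; [apply H2 | apply H1]; auto; lra.
Qed.

Lemma compact_closed_inter (C F : X -> Prop) :
  compact_set d C -> is_open d (fun x => ~ F x) -> compact_set d (fun x => C x /\ F x).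
Proof.
  intros HC HF I U HU Hcov.
  destruct (HC (option I) (fun o x => match o with Some i => U i x | None => ~ F x end))
    as [l Hl].
  - intros [i|]; [apply HU | exact HF].
  - intros x Hx. destruct (classic (F x)) as [Fx|nFx].
    + destruct (Hcov x (conj Hx Fx)) as [i Hi]. exists (Some i). exact Hi.
    + exists None. exact nFx.
  - exists (flat_map (fun o => match o with Some i => [i] | None => [] end) l).
    intros x [Hx Fx]. destruct (Hl x Hx) as [[i|] [Hin Hi]]; [|contradiction].
    exists i. split; [|exact Hi]. apply in_flat_map. exists (Some i). split; [exact Hin | left; reflexivity].
Qed.

(* A decreasing sequence of closed balls centred in a compact set [C] has a
   common point in [C]: otherwise finitely many complements would cover [C],
   yet the centre of the last of them lies in all the balls. *)
Lemma nested_cballs_meet (C : X -> Prop) (b : nat -> cball) :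
  compact_set d C -> (forall k, C (fst (b k))) -> (forall k, cball_sub (b (S k)) (b k)) ->
  exists z, C z /\ forall k, in_cball (b k) z.
Proof.
  intros HC Hctr Hnest.
  assert (Hdesc : forall i j x, (i <= j)%nat -> in_cball (b j) x -> in_cball (b i) x).
  { intros i j x Hij. induction Hij as [|j Hij IH]; [auto|].
    intros Hx. apply IH. eapply cball_sub_incl; [apply Hnest | exact Hx]. }
  apply NNPP. intros Hno.
  destruct (HC nat (fun k x => ~ in_cball (b k) x)) as [l Hl].
  - intros k. apply cball_compl_open.
  - intros x Hx. apply NNPP. intros Hx'. apply Hno. exists x. split; [exact Hx|].
    intros k. apply NNPP. intros Hk. apply Hx'. exists k. exact Hk.
  - set (M := list_max l).
    destruct (Hl (fst (b M)) (Hctr M)) as [i [Hi Hout]]. apply Hout.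
    apply (Hdesc i M).
    + pose proof (proj1 (list_max_le l M) (le_n _)) as Hmax.
      rewrite Forall_forall in Hmax. auto.
    + apply in_cball_center. pose proof (cball_sub_rad _ _ (Hnest M)). lra.
Qed.

Lemma finite_net (r : R) :
  compact_space d -> r > 0 -> exists l : list X, forall y, exists c, In c l /\ d c y < r.
Proof.
  intros Hc Hr. destruct (Hc X (fun c y => d c y < r)) as [l Hl].
  - intros c. apply open_ball_open.
  - intros x _. exists x. rewrite d_refl. exact Hr.
  - exists l. intros y. exact (Hl y I).
Qed.

Lemma ball_base (x0 : X) :
  compact_space d ->
  exists (ctr : nat -> X) (rad : nat -> R), (forall m, rad m > 0) /\
    forall V x, is_open d V -> V x -> exists m, forall y, d (ctr m) y < rad m -> V y.
Proof.
  intros Hc.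
  destruct (choice (fun k (l : list X) => forall y, exists c, In c l /\ d c y < / INR (S k)))
    as [net Hnet].
  { intros k. apply finite_net; [exact Hc | apply inv_succ_pos]. }
  exists (fun m => nth (snd (of_nat m)) (net (fst (of_nat m))) x0),
         (fun m => / INR (S (fst (of_nat m)))).
  split; [intros m; apply inv_succ_pos|].
  intros V x HV Vx. destruct (HV x Vx) as [rho [Hrho Hball]].
  destruct (inv_succ_small (rho / 2)) as [k Hk]; [lra|].
  destruct (Hnet k x) as [c [Hin Hcx]]. destruct (In_nth _ _ x0 Hin) as [i [_ Hi]].
  exists (to_nat (k, i)). rewrite cancel_of_to. cbn [fst snd]. rewrite Hi.
  intros y Hy. apply Hball. pose proof (Hk k (le_n _)). pose proof (d_tri x c y).
  rewrite (d_sym x c) in *. lra.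
Qed.

Lemma union_dense (ctr : nat -> X) (rad : nat -> R) (K : nat -> X -> Prop) :
  (forall V x, is_open d V -> V x -> exists m, forall y, d (ctr m) y < rad m -> V y) ->
  (forall m, exists x, K m x /\ d (ctr m) x < rad m) ->
  dense d (fun x => exists m, K m x).
Proof.
  intros Hbase HK V HV [x Vx]. destruct (Hbase V x HV Vx) as [m Hm].
  destruct (HK m) as [z [Kz Hz]]. exists z. split; [apply Hm, Hz | exists m; exact Kz].
Qed.

Lemma cantor_two_points (K : X -> Prop) :
  cantor_set d K -> exists x y, K x /\ K y /\ x <> y.
Proof.
  intros [[z Kz] [_ [Hperf _]]]. destruct (Hperf z Kz 1) as [y [Ky [Hne _]]]; [lra|].
  exists y, z. auto.
Qed.

End MetricSpace.

Arguments in_cball {X} d b x.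
Arguments cball_sub {X} d b' b.
Arguments d_nonneg {X d}.
Arguments d_refl {X d}.
Arguments d_sym {X d}.
Arguments d_tri {X d}.
Arguments d_zero_eq {X d}.
Arguments open_ball_open {X d}.
Arguments cball_sub_incl {X d}.
Arguments cball_sub_refl {X d}.
Arguments cball_sub_trans {X d}.
Arguments cball_sub_rad {X d}.
Arguments in_cball_center {X d}.
Arguments cball_diam {X d}.
Arguments cball_compl_open {X d}.
Arguments cballs_compl_open {X d}.
Arguments compact_closed_inter {X d}.
Arguments nested_cballs_meet {X d}.
Arguments finite_net {X d}.
Arguments ball_base {X d}.
Arguments union_dense {X d}.
Arguments cantor_two_points {X d}.

Section Dynamics.
Variable X : Type.
Variable d : X -> X -> R.
Hypothesis Hd : is_metric d.
Variable f : X -> X.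
Hypothesis Hf : continuous_map d f.
Variable eps : R.
Hypothesis Heps : eps > 0.

Lemma iter_continuous (n : nat) x e : e > 0 -> exists delta, delta > 0 /\
  forall y, d x y < delta -> d (Nat.iter n f x) (Nat.iter n f y) < e.
Proof.
  revert x e. induction n as [|n IH]; intros x e He.
  - exists e. split; [exact He | auto].
  - destruct (Hf (Nat.iter n f x) e He) as [d1 [Hd1 H1]].
    destruct (IH x d1 Hd1) as [d2 [Hd2 H2]].
    exists d2. split; [exact Hd2|]. intros y Hy. apply H1, H2, Hy.
Qed.

Definition far_after (s : nat) (x y : X) : Prop :=
  exists n, (n >= s)%nat /\ orbit_dist d f x y n > eps - / INR (S s).

Lemma far_after_sym s x y : far_after s x y -> far_after s y x.
Proof.
  intros [n [Hn Hfar]]. exists n. split; [exact Hn|].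
  unfold orbit_dist in *. rewrite d_sym by exact Hd. exact Hfar.
Qed.

Lemma far_after_anti s t x y : (s <= t)%nat -> far_after t x y -> far_after s x y.
Proof.
  intros Hst [n [Hn Hfar]]. exists n. split; [lia|].
  pose proof (inv_succ_anti s t Hst). lra.
Qed.

Lemma far_after_irrefl s x : / INR (S s) <= eps -> ~ far_after s x x.
Proof.
  intros Hs [n [_ Hfar]]. unfold orbit_dist in Hfar. rewrite d_refl in Hfar by exact Hd. lra.
Qed.

Lemma far_after_limsup x y : (forall s, far_after s x y) -> limsup_ge d f x y eps.
Proof.
  intros Hfar e He N. destruct (inv_succ_small e He) as [M HM].
  destruct (Hfar (Nat.max M N)) as [n [Hn Hgt]]. exists n. split; [lia|].
  pose proof (HM (Nat.max M N) ltac:(lia)). lra.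
Qed.

Lemma three_eps_dichotomy (C : X -> Prop) s x y1 y2 :
  synd_scrambled d f (3 * eps) C -> C y1 -> C y2 -> y1 <> y2 ->
  far_after s x y1 \/ far_after s x y2.
Proof.
  intros [_ HC] C1 C2 Hne. apply NNPP. intros Hnear. apply not_or_and in Hnear.
  destruct Hnear as [N1 N2].
  destruct (HC y1 y2 C1 C2 Hne) as [_ [_ Hlim]].
  destruct (Hlim eps Heps s) as [n [Hn Hgt]].
  assert (A1 : orbit_dist d f x y1 n <= eps - / INR (S s))
    by (apply Rnot_gt_le; intros G; apply N1; exists n; auto).
  assert (A2 : orbit_dist d f x y2 n <= eps - / INR (S s))
    by (apply Rnot_gt_le; intros G; apply N2; exists n; auto).
  unfold orbit_dist in *.
  pose proof (d_tri Hd (Nat.iter n f y1) (Nat.iter n f x) (Nat.iter n f y2)).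
  rewrite (d_sym Hd (Nat.iter n f y1) (Nat.iter n f x)) in *.
  pose proof (inv_succ_pos s). lra.
Qed.

Lemma far_after_open s x y : far_after s x y -> exists delta, delta > 0 /\
  forall x' y', d x x' <= delta -> d y y' <= delta -> far_after s x' y'.
Proof.
  intros [n [Hn Hfar]]. unfold orbit_dist in Hfar.
  set (g := d (Nat.iter n f x) (Nat.iter n f y) - (eps - / INR (S s))).
  destruct (iter_continuous n x (g / 2)) as [d1 [Hd1 H1]]; [unfold g; lra|].
  destruct (iter_continuous n y (g / 2)) as [d2 [Hd2 H2]]; [unfold g; lra|].
  assert (Hmin : Rmin d1 d2 > 0) by (apply Rmin_Rgt_r; lra).
  pose proof (Rmin_l d1 d2). pose proof (Rmin_r d1 d2).
  exists (Rmin d1 d2 / 2). split; [lra|]. intros x' y' Hx Hy.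
  pose proof (H1 x' ltac:(lra)). pose proof (H2 y' ltac:(lra)).
  exists n. split; [exact Hn|]. unfold orbit_dist.
  pose proof (d_tri Hd (Nat.iter n f x) (Nat.iter n f x') (Nat.iter n f y)).
  pose proof (d_tri Hd (Nat.iter n f x') (Nat.iter n f y') (Nat.iter n f y)).
  rewrite (d_sym Hd (Nat.iter n f y')) in *. unfold g in *. lra.
Qed.

Lemma limsup_not_asy x y : limsup_ge d f x y eps -> ~ Asy d f x y.
Proof.
  intros Hlim Hasy. destruct (Hasy (eps / 2)) as [N HN]; [lra|].
  destruct (Hlim (eps / 2) ltac:(lra) N) as [n [Hn Hgt]].
  pose proof (HN n Hn). lra.
Qed.

Lemma synd_scrambled_intro (T : X -> Prop) :
  (exists x y, T x /\ T y /\ x <> y) ->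
  (forall x y, T x -> T y -> x <> y -> SProx d f x y /\ limsup_ge d f x y eps) ->
  synd_scrambled d f eps T.
Proof.
  intros Htwo Hpairs. split; [exact Htwo|]. intros x y Tx Ty Hne.
  destruct (Hpairs x y Tx Ty Hne) as [Hprox Hlim].
  split; [exact Hprox | split; [apply limsup_not_asy, Hlim | exact Hlim]].
Qed.

Section CantorScheme.
Variable C : nat -> X -> Prop.
Hypothesis C_cantor : forall n, cantor_set d (C n).
Hypothesis C_scrambled : forall n, synd_scrambled d f (3 * eps) (C n).

(* Nodes of the scheme: a Cantor set number and a binary word. *)
Definition index : Type := (nat * list bool)%type.

Definition index_eq_dec (i j : index) : {i = j} + {i <> j}.
Proof. decide equality; [apply (list_eq_dec Bool.bool_dec) | apply Nat.eq_dec]. Defined.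

Definition scheme : Type := index -> cball X.

Definition valid (P : scheme) : Prop := forall i, C (fst i) (fst (P i)) /\ 0 < snd (P i).

Definition refines (P' P : scheme) : Prop := forall i, cball_sub d (P' i) (P i).

Definition far_balls (s : nat) (b b' : cball X) : Prop :=
  forall x y, in_cball d b x -> in_cball d b' y -> far_after s x y.

Lemma refines_refl P : valid P -> refines P P.
Proof. intros HP i. apply (cball_sub_refl Hd), HP. Qed.

Lemma refines_trans P'' P' P : refines P'' P' -> refines P' P -> refines P'' P.
Proof. intros H1 H2 i. eapply (cball_sub_trans Hd); eauto. Qed.

Lemma far_balls_mono s b1' b1 b2' b2 :
  cball_sub d b1' b1 -> cball_sub d b2' b2 -> far_balls s b1 b2 -> far_balls s b1' b2'.
Proof. intros H1 H2 H x y Hx Hy. apply H; eapply (cball_sub_incl Hd); eauto. Qed.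

(* Two balls centred in [C a] and [C b] contain smaller such balls that are far
   after time s: move the second centre, if needed, to a nearby point of the
   perfect set [C b] chosen by the 3ε-trick, then shrink by openness. *)
Lemma separate_pair s a b (p q : cball X) :
  C a (fst p) -> 0 < snd p -> C b (fst q) -> 0 < snd q ->
  exists p' q', C a (fst p') /\ C b (fst q') /\
    cball_sub d p' p /\ cball_sub d q' q /\ far_balls s p' q'.
Proof.
  destruct p as [c1 r1], q as [c2 r2]; cbn [fst snd]. intros Hc1 Hr1 Hc2 Hr2.
  destruct (C_cantor b) as [_ [_ [Hperf _]]].
  destruct (Hperf c2 Hc2 (r2 / 2)) as [y2 [Hy2 [Hne Hdy2]]]; [lra|].
  assert (Hy : exists y, C b y /\ d c2 y < r2 / 2 /\ far_after s c1 y).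
  { destruct (three_eps_dichotomy (C b) s c1 y2 c2 (C_scrambled b) Hy2 Hc2 Hne) as [Hf1|Hf2].
    - exists y2. auto.
    - exists c2. rewrite d_refl by exact Hd. repeat split; auto; lra. }
  destruct Hy as [y [Cy [Hdy Hfar]]].
  destruct (far_after_open s c1 y Hfar) as [del [Hdel Hnear]].
  pose proof (Rmin_l del r1). pose proof (Rmin_r del r1).
  pose proof (Rmin_l del (r2 / 2)). pose proof (Rmin_r del (r2 / 2)).
  assert (Rmin del r1 > 0) by (apply Rmin_Rgt_r; lra).
  assert (Rmin del (r2 / 2) > 0) by (apply Rmin_Rgt_r; lra).
  exists (c1, Rmin del r1), (y, Rmin del (r2 / 2)); cbn [fst snd].
  unfold cball_sub, far_balls, in_cball; cbn [fst snd]. rewrite d_refl by exact Hd.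
  repeat split; auto; try lra. intros x' y' Hx' Hy'. apply Hnear; lra.
Qed.

Definition update (P : scheme) (i : index) (p : cball X) : scheme :=
  fun j => if index_eq_dec j i then p else P j.

Lemma update_at P i p : update P i p i = p.
Proof. unfold update. destruct (index_eq_dec i i); congruence. Qed.

Lemma update_other P i j p : j <> i -> update P i p j = P j.
Proof. unfold update. destruct (index_eq_dec j i); congruence. Qed.

Lemma update_refines P i p :
  valid P -> C (fst i) (fst p) -> cball_sub d p (P i) ->
  valid (update P i p) /\ refines (update P i p) P.
Proof.
  intros HP Cp Hsub. split; intros j; unfold update;
    destruct (index_eq_dec j i) as [->|]; auto.
  - split; [exact Cp | apply (cball_sub_rad Hd _ _ Hsub)].
  - apply refines_refl, HP.
Qed.

Lemma refine_pairs s (prs : list (index * index)) : forall P, valid P ->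
  exists P', valid P' /\ refines P' P /\
    forall i j, In (i, j) prs -> i <> j -> far_balls s (P' i) (P' j).
Proof.
  induction prs as [|[i j] prs IH]; intros P HP.
  - exists P. split; [exact HP | split; [apply refines_refl, HP | intros i j []]].
  - destruct (IH P HP) as [P1 [HP1 [HR1 Hfar1]]].
    assert (Hkept : forall P2, refines P2 P1 -> forall i' j', In (i', j') prs -> i' <> j' ->
              far_balls s (P2 i') (P2 j')).
    { intros P2 HR i' j' Hin Hne. apply (far_balls_mono s _ (P1 i') _ (P1 j')); auto. }
    destruct (index_eq_dec i j) as [<-|Hij].
    + exists P1. split; [exact HP1 | split; [exact HR1|]].
      intros i' j' [E|Hin] Hne; [injection E; congruence | auto].
    + destruct (HP1 i) as [Ci ri]. destruct (HP1 j) as [Cj rj].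
      destruct (separate_pair s _ _ _ _ Ci ri Cj rj) as [p [q [Cp [Cq [Hp [Hq Hpq]]]]]].
      destruct (update_refines P1 i p HP1 Cp Hp) as [HP2 HR2].
      destruct (update_refines (update P1 i p) j q HP2) as [HP3 HR3].
      { exact Cq. } { rewrite update_other by congruence. exact Hq. }
      assert (HR : refines (update (update P1 i p) j q) P1) by (eapply refines_trans; eauto).
      exists (update (update P1 i p) j q). split; [exact HP3|].
      split; [exact (refines_trans _ _ _ HR HR1)|].
      intros i' j' [E|Hin] Hne; [|apply Hkept; [exact HR | exact Hin | exact Hne]].
      injection E as <- <-. rewrite update_at, update_other, update_at by congruence. exact Hpq.
Qed.

Lemma refine_finite s (L : list index) P : valid P ->
  exists P', valid P' /\ refines P' P /\
    forall i j, In i L -> In j L -> i <> j -> far_balls s (P' i) (P' j).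
Proof.
  intros HP. destruct (refine_pairs s (list_prod L L) P HP) as [P' [HP' [HR Hfar]]].
  exists P'. split; [exact HP' | split; [exact HR|]].
  intros i j Hi Hj. apply Hfar, in_prod; assumption.
Qed.

Fixpoint words (m : nat) : list (list bool) :=
  match m with
  | O => [nil]
  | S m' => flat_map (fun w => [false :: w; true :: w]) (words m')
  end.

Lemma In_words m w : In w (words m) <-> length w = m.
Proof.
  revert w. induction m as [|m IH]; intros w; cbn [words].
  - split; [intros [<-|[]]; reflexivity | destruct w; [left; reflexivity | discriminate]].
  - rewrite in_flat_map. split.
    + intros [v [Hv Hw]]. apply IH in Hv.
      destruct Hw as [<-|[<-|[]]]; cbn [length]; lia.
    + destruct w as [|b v]; cbn [length]; [discriminate|]. intros Hl.
      exists v. split; [apply IH; lia | destruct b; cbn; auto].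
Qed.

Definition active (s : nat) : list index :=
  flat_map (fun n => map (fun w => (n, w)) (words (s - n))) (seq 0 (S s)).

Lemma in_active s n w : (n <= s)%nat -> length w = (s - n)%nat -> In (n, w) (active s).
Proof.
  intros Hn Hw. unfold active. apply in_flat_map. exists n.
  split; [apply in_seq; lia | apply in_map, In_words, Hw].
Qed.

(* The construction is parametrised by a chosen point of each [C n] and a
   chosen refinement operator (both exist by [refine_finite] and choice). *)
Variable center0 : nat -> X.
Hypothesis center0_in : forall n, C n (center0 n).
Variable refine : nat -> scheme -> scheme.
Hypothesis refine_spec : forall s P, valid P ->
  valid (refine s P) /\ refines (refine s P) P /\
  forall i j, In i (active s) -> In j (active s) -> i <> j ->
    far_balls s (refine s P i) (refine s P j).

Definition root (n : nat) : cball X := (center0 n, / INR (S n)).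

(* Passage to stage s + 1: the root of the new set [C (s+1)] enters, and every
   node spawns two children, copies of itself shrunk to radius ≤ 1/(s+2). *)
Definition extend (s : nat) (P : scheme) : scheme := fun i =>
  match snd i with
  | nil => root (fst i)
  | _ :: w => (fst (P (fst i, w)), Rmin (snd (P (fst i, w))) (/ INR (S (S s))))
  end.

Fixpoint stage (s : nat) : scheme :=
  match s with
  | O => refine 0 (fun i => root (fst i))
  | S s' => refine (S s') (extend s' (stage s'))
  end.

Lemma valid_root : valid (fun i => root (fst i)).
Proof. intros [n w]. split; [apply center0_in | apply inv_succ_pos]. Qed.

Lemma valid_extend s P : valid P -> valid (extend s P).
Proof.
  intros HP [n [|b w]]; unfold extend; cbn [fst snd].
  - apply (valid_root (n, nil)).
  - split; [apply (HP (n, w))|].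
    apply Rmin_Rgt_r. split; [apply (HP (n, w)) | apply inv_succ_pos].
Qed.

Lemma extend_child s P n b w : valid P -> cball_sub d (extend s P (n, b :: w)) (P (n, w)).
Proof.
  intros HP. unfold extend, cball_sub; cbn [fst snd]. rewrite d_refl by exact Hd.
  pose proof (Rmin_l (snd (P (n, w))) (/ INR (S (S s)))).
  split; [|lra]. apply Rmin_Rgt_r. split; [apply (HP (n, w)) | apply inv_succ_pos].
Qed.

Lemma stage_valid s : valid (stage s).
Proof.
  induction s as [|s IH]; cbn [stage].
  - apply refine_spec, valid_root.
  - apply refine_spec, valid_extend, IH.
Qed.

Lemma stage_far s i j : In i (active s) -> In j (active s) -> i <> j ->
  far_balls s (stage s i) (stage s j).
Proof.
  destruct s as [|s]; cbn [stage].
  - apply refine_spec, valid_root.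
  - apply refine_spec, valid_extend, stage_valid.
Qed.

Lemma stage_child s n b w : cball_sub d (stage (S s) (n, b :: w)) (stage s (n, w)).
Proof.
  cbn [stage]. eapply (cball_sub_trans Hd).
  - apply (refine_spec (S s) _ (valid_extend s _ (stage_valid s))).
  - apply extend_child, stage_valid.
Qed.

Lemma stage_rad s n w : (n + length w)%nat = s -> snd (stage s (n, w)) <= / INR (S s).
Proof.
  intros Hs. destruct s as [|s]; cbn [stage].
  - eapply Rle_trans; [apply (cball_sub_rad Hd _ _ (proj1 (proj2 (refine_spec 0 _ valid_root)) _))|].
    cbn. replace n with 0%nat by lia. apply Rle_refl.
  - eapply Rle_trans.
    { apply (cball_sub_rad Hd _ _ (proj1 (proj2 (refine_spec (S s) _
               (valid_extend s _ (stage_valid s)))) _)). }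
    unfold extend. destruct w as [|b w]; cbn [fst snd length] in *.
    + replace n with (S s) by lia. apply Rle_refl.
    + apply Rmin_r.
Qed.

Lemma stage_ancestor j : forall s n w x, (j <= length w)%nat ->
  in_cball d (stage (j + s) (n, w)) x -> in_cball d (stage s (n, skipn j w)) x.
Proof.
  induction j as [|j IH]; intros s n w x Hl Hx; [exact Hx|].
  destruct w as [|b w]; cbn [length] in Hl; [lia|].
  apply IH; [lia|]. eapply (cball_sub_incl Hd); [apply stage_child | exact Hx].
Qed.

Definition on_branch (n : nat) (x : X) : Prop :=
  forall s, (n <= s)%nat -> exists w, length w = (s - n)%nat /\ in_cball d (stage s (n, w)) x.

Definition K (n : nat) (x : X) : Prop := C n x /\ on_branch n x.

(* Every node's ball meets [K n]: follow its leftmost descendants and use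
   compactness of [C n]. *)
Lemma K_meets_node t n w : (n <= t)%nat -> length w = (t - n)%nat ->
  exists z, K n z /\ in_cball d (stage t (n, w)) z.
Proof.
  intros Hnt Hw.
  destruct (nested_cballs_meet Hd (C n) (fun k => stage (k + t) (n, repeat false k ++ w)))
    as [z [Cz Hz]].
  - apply C_cantor.
  - intros k. apply (stage_valid (k + t) (n, repeat false k ++ w)).
  - intros k. apply (stage_child (k + t) n false (repeat false k ++ w)).
  - exists z. split; [split; [exact Cz|] | exact (Hz 0%nat)].
    intros s Hs. destruct (Nat.le_gt_cases t s) as [Hts|Hts].
    + exists (repeat false (s - t) ++ w). rewrite length_app, repeat_length.
      split; [lia|]. replace s with (s - t + t)%nat at 1 by lia. apply Hz.
    + exists (skipn (t - s) w). rewrite length_skipn. split; [lia|].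
      apply stage_ancestor; [lia|]. replace (t - s + s)%nat with t by lia. exact (Hz 0%nat).
Qed.

(* Lying on a branch is a closed condition: a stage has finitely many balls. *)
Lemma on_branch_closed n : is_open d (fun x => ~ on_branch n x).
Proof.
  intros x Hx.
  assert (Hs : exists s, (n <= s)%nat /\
            forall w, length w = (s - n)%nat -> ~ in_cball d (stage s (n, w)) x).
  { apply NNPP. intros Hno. apply Hx. intros s Hs. apply NNPP. intros Hnw. apply Hno.
    exists s. split; [exact Hs|]. intros w Hl Hin. apply Hnw. exists w. auto. }
  destruct Hs as [s [Hs Hout]].
  destruct (cballs_compl_open Hd (map (fun w => stage s (n, w)) (words (s - n))) x)
    as [rho [Hrho Hnear]].
  { intros b Hb. apply in_map_iff in Hb. destruct Hb as [w [<- Hw]].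
    apply Hout, In_words, Hw. }
  exists rho. split; [exact Hrho|]. intros y Hy Hon.
  destruct (Hon s Hs) as [w [Hl Hin]].
  apply (Hnear y Hy (stage s (n, w))); [apply (in_map (fun v => stage s (n, v))), In_words, Hl | exact Hin].
Qed.

(* The two children of a node carry distinct points of [K n] close to any
   given point of the node, so [K n] has no isolated point. *)
Lemma K_perfect n : perfect_set d (K n).
Proof.
  intros x [Cx Bx] r Hr.
  destruct (inv_succ_small (Rmin (r / 2) eps)) as [N HN]; [apply Rmin_Rgt_r; lra|].
  set (s := Nat.max N n).
  pose proof (HN s ltac:(lia)). pose proof (Rmin_l (r / 2) eps). pose proof (Rmin_r (r / 2) eps).
  destruct (Bx s ltac:(lia)) as [w [Hl Hin]].
  assert (Hchild : forall b, exists z, K n z /\ in_cball d (stage s (n, w)) z /\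
                     in_cball d (stage (S s) (n, b :: w)) z).
  { intros b. destruct (K_meets_node (S s) n (b :: w)) as [z [Kz Hz]]; [lia | cbn [length]; lia|].
    exists z. split; [exact Kz | split; [eapply (cball_sub_incl Hd); [apply stage_child|]|]; exact Hz]. }
  destruct (Hchild false) as [z0 [K0 [B0 C0]]]. destruct (Hchild true) as [z1 [K1 [B1 C1]]].
  assert (Hne : z0 <> z1).
  { intros <-. apply (far_after_irrefl (S s) z0).
    - pose proof (inv_succ_anti s (S s) ltac:(lia)). lra.
    - apply (stage_far (S s) (n, false :: w) (n, true :: w)); auto; try congruence;
        apply in_active; cbn [length]; lia. }
  pose proof (stage_rad s n w ltac:(lia)).
  destruct (classic (z0 = x)) as [->|Hz0].
  - exists z1. pose proof (cball_diam Hd _ _ _ Hin B1). split; [exact K1 | split; [congruence | lra]].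
  - exists z0. pose proof (cball_diam Hd _ _ _ Hin B0). split; [exact K0 | split; [exact Hz0 | lra]].
Qed.

Lemma K_cantor n : cantor_set d (K n).
Proof.
  destruct (C_cantor n) as [_ [HC [_ Htd]]].
  split; [|split; [|split]].
  - destruct (K_meets_node n n nil) as [z [Kz _]]; [lia | cbn; lia | exists z; exact Kz].
  - apply compact_closed_inter; [exact HC | apply on_branch_closed].
  - apply K_perfect.
  - intros A HA. apply Htd. intros x Hx. apply HA, Hx.
Qed.

(* Distinct points of ⋃ K_n eventually sit in distinct (small) balls of the
   same stage, hence are far after every time. *)
Lemma K_far a b x y : K a x -> K b y -> x <> y -> forall t, far_after t x y.
Proof.
  intros [_ Bx] [_ By] Hne t.
  assert (Hpos : d x y > 0).
  { destruct (d_nonneg Hd x y) as [H|H]; [exact H|]. exfalso. apply Hne, (d_zero_eq Hd). auto. }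
  destruct (inv_succ_small (d x y / 2)) as [N HN]; [lra|].
  set (s := Nat.max (Nat.max a b) (Nat.max N t)).
  destruct (Bx s ltac:(lia)) as [wx [Hlx Hx]].
  destruct (By s ltac:(lia)) as [wy [Hly Hy]].
  apply (far_after_anti t s); [lia|].
  destruct (index_eq_dec (a, wx) (b, wy)) as [E|E].
  - exfalso. injection E as <- <-.
    pose proof (cball_diam Hd _ _ _ Hx Hy). pose proof (stage_rad s a wx ltac:(lia)).
    pose proof (HN s ltac:(lia)). lra.
  - apply (stage_far s (a, wx) (b, wy)); auto; apply in_active; lia.
Qed.

End CantorScheme.

Lemma scrambled_cantor_refinement (C : nat -> X -> Prop) :
  (forall n, cantor_set d (C n)) -> (forall n, synd_scrambled d f (3 * eps) (C n)) ->
  exists K : nat -> X -> Prop, (forall n, cantor_set d (K n)) /\ (forall n x, K n x -> C n x) /\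
    forall a b x y, K a x -> K b y -> x <> y -> limsup_ge d f x y eps.
Proof.
  intros HC HCs.
  destruct (choice (fun n x => C n x) (fun n => proj1 (HC n))) as [center0 Hcenter0].
  destruct (choice (fun (sP : nat * scheme) P' => valid C (snd sP) ->
              valid C P' /\ refines P' (snd sP) /\
              forall i j, In i (active (fst sP)) -> In j (active (fst sP)) -> i <> j ->
                far_balls (fst sP) (P' i) (P' j))) as [refine Hrefine].
  { intros [s P]. destruct (classic (valid C P)) as [HP|HP].
    - destruct (refine_finite C HC HCs s (active s) P HP) as [P' HP']. exists P'. auto.
    - exists P. intros HP'. contradiction. }
  set (refine_op := fun s P => refine (s, P)).
  assert (Hspec : forall s P, valid C P -> valid C (refine_op s P) /\ refines (refine_op s P) P /\
            forall i j, In i (active s) -> In j (active s) -> i <> j ->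
              far_balls s (refine_op s P i) (refine_op s P j))
    by (intros s P; exact (Hrefine (s, P))).
  exists (K C center0 refine_op). split; [|split].
  - intros n. apply K_cantor; assumption.
  - intros n x [Cx _]. exact Cx.
  - intros a b x y Kx Ky Hne. apply far_after_limsup. eapply K_far; eassumption.
Qed.

End Dynamics.

Theorem proposition3p13 (X : Type) (d : X -> X -> R) (f : X -> X)
  (Hd : is_metric d) (Hc : compact_space d) (Hf : continuous_map d f)
  (eps : R) (S : X -> Prop) (Heps : eps > 0)
  (HSdense : dense d S) (HSmyc : mycielski_set d S)
  (Hprox : forall x y, S x -> S y -> SProx d f x y)
  (HW : forall W, is_open d W -> (exists x, W x) ->
        exists C, cantor_set d C /\ (forall x, C x -> S x /\ W x) /\
                  synd_scrambled d f (3 * eps) C) :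
  exists T, (forall x, T x -> S x) /\ dense d T /\ mycielski_set d T /\
            synd_scrambled d f eps T.
Proof.
  destruct HSmyc as [CS [HCS _]]. destruct (proj1 (HCS 0%nat)) as [x0 _].
  destruct (ball_base Hd x0 Hc) as [ctr [rad [Hrad Hbase]]].
  destruct (choice (fun m Cm => cantor_set d Cm /\
              (forall x, Cm x -> S x /\ d (ctr m) x < rad m) /\
              synd_scrambled d f (3 * eps) Cm)) as [C HC].
  { intros m. apply HW; [apply open_ball_open; exact Hd|].
    exists (ctr m). rewrite (d_refl Hd). apply Hrad. }
  destruct (scrambled_cantor_refinement X d Hd f Hf eps Heps C) as [K [HK [HKC HKfar]]];
    [intros m; apply HC .. |].
  assert (HKS : forall m x, K m x -> S x /\ d (ctr m) x < rad m)
    by (intros m x Kx; apply (HC m), HKC, Kx).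
  exists (fun x => exists m, K m x). split; [|split; [|split]].
  - intros x [m Kx]. apply (HKS m x Kx).
  - apply (union_dense ctr rad K Hbase). intros m.
    destruct (proj1 (HK m)) as [x Kx]. exists x. split; [exact Kx | apply (HKS m x Kx)].
  - exists K. split; [exact HK | reflexivity].
  - apply synd_scrambled_intro; [exact Heps| |].
    + destruct (cantor_two_points (K 0%nat) (HK 0%nat)) as [x [y [Kx [Ky Hne]]]].
      exists x, y. split; [exists 0%nat; exact Kx | split; [exists 0%nat; exact Ky | exact Hne]].
    + intros x y [a Kx] [b Ky] Hne.
      split; [apply Hprox; [apply (HKS a x Kx) | apply (HKS b y Ky)] | exact (HKfar a b x y Kx Ky Hne)].
Qed.
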